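(* Let $(\Omega,T)$ be a strictly ergodic subshift over a finite alphabet $A\subset\mathbb{R}$ and $E\in\mathbb{R}$. Then $M^E$ is uniform if and only if the limit $\lim_{|x|\to\infty}\frac{F^E(x)}{|x|}$ (over $x\in\mathcal{W}$) exists.
   Context: Let $A\subset\mathbb{R}$ be finite with the discrete topology, $A^{\mathbb{Z}}$ with the product topology, and $T$ the shift $(Ta)(n)=a(n+1)$. A subshift is a closed $T$-invariant set $\Omega\subset A^{\mathbb{Z}}$; strictly ergodic means every orbit is dense and there is exactly one $T$-invariant Borel probability measure. $\mathcal{W}$ is the set of finite subwords of elements of $\Omega$ and $|x|$ the length of $x$. For $E\in\mathbb{R}$, $M^E(\omega)=\begin{pmatrix}E-\omega(1)&-1\\1&0\end{pmatrix}$, $M^E(n,\omega)=M^E(T^{n-1}\omega)\cdots M^E(\omega)$ for $n>0$, $\mathrm{Id}$ for $n=0$, $M^E(T^n\omega)^{-1}\cdots M^E(T^{-1}\omega)^{-1}$ for $n<0$. With $\|\cdot\|$ the operator norm, $M^E$ is uniform if $\lim_{|n|\to\infty}\frac1{|n|}\log\|M^E(n,\omega)\|$ exists for every $\omega\in\Omega$ and the convergence is uniform on $\Omega$. Define $F^E:\mathcal{W}\to\mathbb{R}$ by $F^E(x)=\log\|M^E(|x|,\omega)\|$, where $\omega\in\Omega$ is any element with $\omega(1)\cdots\omega(|x|)=x$ (this is independent of the choice of $\omega$). *)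

From HB Require Import structures.
From mathcomp Require Import all_boot all_order all_algebra.
From mathcomp Require Import all_classical all_reals all_analysis.
Set Implicit Arguments. Unset Strict Implicit. Unset Printing Implicit Defensive.
Import Order.TTheory GRing.Theory Num.Theory.
Local Open Scope classical_set_scope.
Local Open Scope ring_scope.

Section Subshift.
Variable R : realType.
Implicit Types w : int -> R.

(* Elements of R^Z; the full shift A^Z is the set of sequences with values in A. *)
Definition seqZ := int -> R.
HB.instance Definition _ := gen_eqMixin seqZ.
HB.instance Definition _ := gen_choiceMixin seqZ.
HB.instance Definition _ := isPointed.Build seqZ (fun _ => 0%R).

Definition shift (w : seqZ) : seqZ := fun n => w (n + 1).
Definition ushift (w : seqZ) : seqZ := fun n => w (n - 1).

Definition in_fullshift (A : seq R) (Om : set seqZ) : Prop :=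
  forall w, Om w -> forall n, w n \in A.

(* closedness in A^Z for the product of discrete topologies:
   a point of A^Z all of whose (centered) cylinder neighbourhoods meet Om lies in Om *)
Definition closed_in_fullshift (A : seq R) (Om : set seqZ) : Prop :=
  forall w : seqZ, (forall n, w n \in A) ->
    (forall N : nat, exists2 w', Om w' &
        forall j : int, (`|j|%N <= N)%N -> w' j = w j) ->
    Om w.

(* T-invariance: T(Om) = Om (T is a bijection of A^Z) *)
Definition shift_invariant (Om : set seqZ) : Prop :=
  forall w, Om w -> Om (shift w) /\ Om (ushift w).

Definition subshift (A : seq R) (Om : set seqZ) : Prop :=
  [/\ in_fullshift A Om, closed_in_fullshift A Om & shift_invariant Om].

Definition shiftZ (k : int) (w : seqZ) : seqZ := fun n => w (n + k).

(* every orbit {T^k w | k in Z} is dense in Om (product topology) *)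
Definition minimal_subshift (Om : set seqZ) : Prop :=
  forall w w', Om w -> Om w' -> forall N : nat,
    exists k : int, forall j : int, (`|j|%N <= N)%N -> shiftZ k w j = w' j.

(* cylinder sets; they generate the Borel sigma-algebra of the product topology *)
Definition cylinders : set (set seqZ) :=
  fun S => exists (n : int) (a : R), S = [set w | w n = a].

Local Notation seqZ_meas := (g_sigma_algebraType cylinders).

(* T-invariant Borel probability measures on Om (viewed as measures on the
   ambient space carried by Om) *)
Definition invariant_prob (Om : set seqZ) (mu : probability seqZ_meas R) : Prop :=
  mu (Om : set seqZ_meas) = 1%E /\
  forall B : set seqZ_meas, measurable B ->
     mu (@shift @^-1` B : set seqZ_meas) = mu B.

Definition uniquely_ergodic (Om : set seqZ) : Prop :=
  exists mu : probability seqZ_meas R, invariant_prob Om mu /\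
    forall nu : probability seqZ_meas R, invariant_prob Om nu ->
      forall B : set seqZ_meas, measurable B -> nu B = mu B.

Definition strictly_ergodic (Om : set seqZ) : Prop :=
  minimal_subshift Om /\ uniquely_ergodic Om.

Definition vnorm2 (v : 'cV[R]_2) : R := Num.sqrt (v 0 0 ^+ 2 + v 1 0 ^+ 2).
Definition opnorm (M : 'M[R]_2) : R :=
  sup [set vnorm2 (M *m v) | v in [set v | vnorm2 (v : 'cV[R]_2) = 1]].

Definition tmat (E a : R) : 'M[R]_2 :=
  \matrix_(i < 2, j < 2)
     if (i == 0 :> nat) then (if (j == 0 :> nat) then E - a else -1)
     else (if (j == 0 :> nat) then 1 else 0).

Definition Mone (E : R) (w : seqZ) : 'M[R]_2 := tmat E (w 1).

Fixpoint Mpos (E : R) (w : seqZ) (n : nat) : 'M[R]_2 :=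
  match n with
  | 0 => 1%:M
  | m.+1 => Mone E (iter m shift w) *m Mpos E w m
  end.

Fixpoint Mneg (E : R) (w : seqZ) (n : nat) : 'M[R]_2 :=
  match n with
  | 0 => 1%:M
  | m.+1 => invmx (Mone E (iter m.+1 ushift w)) *m Mneg E w m
  end.

Definition Mcocycle (E : R) (n : int) (w : seqZ) : 'M[R]_2 :=
  match n with
  | Posz m => Mpos E w m
  | Negz m => Mneg E w m.+1
  end.

Definition uniform_cocycle (Om : set seqZ) (E : R) : Prop :=
  exists L : seqZ -> R, forall eps : R, 0 < eps ->
    exists N : nat, forall n : int, (N <= `|n|%N)%N ->
      forall w, Om w ->
        `| ln (opnorm (Mcocycle E n w)) / (`|n|%N)%:R - L w | < eps.

Definition words (Om : set seqZ) (x : seq R) : Prop :=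
  exists2 w, Om w & exists k : int,
    forall i : nat, (i < size x)%N -> nth 0 x i = w (k + i%:Z).

(* M^E(|x|, w) for any w with w(1)...w(|x|) = x: product tmat x_|x| ... tmat x_1 *)
Definition wordmat (E : R) (x : seq R) : 'M[R]_2 :=
  foldl (fun M a => tmat E a *m M) 1%:M x.

Definition FE (E : R) (x : seq R) : R := ln (opnorm (wordmat E x)).

Definition word_limit_exists (Om : set seqZ) (E : R) : Prop :=
  exists l : R, forall eps : R, 0 < eps ->
    exists N : nat, forall x, words Om x -> (N <= size x)%N ->
      `| FE E x / (size x)%:R - l | < eps.

End Subshift.

From Pilot Require Import Defs.
From HB Require Import structures.
From mathcomp Require Import all_boot all_order all_algebra.
From mathcomp Require Import all_classical all_reals all_analysis.
From mathcomp Require Import ring lra zify.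
Set Implicit Arguments. Unset Strict Implicit. Unset Printing Implicit Defensive.
Import Order.TTheory GRing.Theory Num.Theory.
Local Open Scope classical_set_scope.
Local Open Scope ring_scope.

(* Transfer matrices have determinant 1, and for such 2x2 matrices the
   Frobenius norm gives 1 <= ||M|| and ||M^-1|| <= 2 ||M||.  For n >= 0,
   M^E(n, w) is the transfer matrix of the word w(1)...w(n), and
   M^E(-n, w) = M^E(n, T^-n w)^-1; so every log ||M^E(n, w)|| is within ln 2
   of F^E of a word of length |n|, and the word limit yields uniformity.
   Conversely, log ||M^E(n+1, w)|| and log ||M^E(n, T w)|| differ by a bounded
   amount, so the uniform limit L is shift invariant.  By minimality some
   T^k w agrees with w' on any finite window, and uniformity then forces L to
   be constant; that constant is the word limit. *)

Section Matrix22.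
Variable R : comUnitRingType.
Implicit Types M : 'M[R]_2.

Lemma lift_ord2 (i : 'I_2) (j : 'I_1) : lift i j = if i == 0 then 1 else 0.
Proof. by apply/val_inj; case: i => [[|[|]]] //; rewrite ord1. Qed.

Lemma mulmx2E m n (A : 'M[R]_(m, 2)) (B : 'M[R]_(2, n)) i j :
  (A *m B) i j = A i 0 * B 0 j + A i 1 * B 1 j.
Proof. by rewrite mxE !big_ord_recl big_ord0 addr0 lift_ord2. Qed.

Lemma det_mx22 M : \det M = M 0 0 * M 1 1 - M 0 1 * M 1 0.
Proof.
rewrite (expand_det_row _ 0) !big_ord_recl big_ord0 addr0 /cofactor !det_mx11.
by rewrite !mxE !lift_ord2 /= expr0 expr1 mul1r mulN1r mulrN.
Qed.

Lemma adj_mx22E M : [/\ \adj M 0 0 = M 1 1, \adj M 0 1 = - M 0 1,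
  \adj M 1 0 = - M 1 0 & \adj M 1 1 = M 0 0].
Proof.
rewrite !mxE /cofactor !det_mx11 !mxE !lift_ord2 /= modn_small //.
by rewrite /= expr0 expr1 expr2; split; ring.
Qed.

Lemma invmx_det1 M : \det M = 1 -> invmx M = \adj M.
Proof. by move=> M1; rewrite /invmx unitmxE M1 unitr1 invr1 scale1r. Qed.

Lemma invmxM n (A B : 'M[R]_n) : A \in unitmx -> B \in unitmx ->
  invmx (A *m B) = invmx B *m invmx A.
Proof.
move=> uA uB; have uAB : A *m B \in unitmx by rewrite unitmx_mul uA.
rewrite -[RHS](mulmxK uAB) mulmxA -(mulmxA _ _ A) mulVmx // mulmx1.
by rewrite mulVmx // mul1mx.
Qed.

Lemma invmxM_det1 (A B : 'M[R]_2) : \det A = 1 -> \det B = 1 ->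
  invmx (A *m B) = invmx B *m invmx A.
Proof. by move=> A1 B1; rewrite invmxM // unitmxE ?A1 ?B1 unitr1. Qed.

End Matrix22.

Section OperatorNorm.
Variable R : realType.
Implicit Types (M A B : 'M[R]_2) (v : 'cV[R]_2).

Definition frob2 M := M 0 0 ^+ 2 + M 0 1 ^+ 2 + M 1 0 ^+ 2 + M 1 1 ^+ 2.

Lemma frob2_ge0 M : 0 <= frob2 M.
Proof. by rewrite /frob2 !addr_ge0 ?sqr_ge0. Qed.

Lemma frob2_adj M : frob2 (\adj M) = frob2 M.
Proof. by rewrite /frob2; case: (adj_mx22E M) => -> -> -> ->; rewrite !sqrrN; ring. Qed.

Lemma det_le_frob2 M : 2 * \det M <= frob2 M.
Proof.
rewrite det_mx22 /frob2 -subr_ge0.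
have : 0 <= (M 0 0 - M 1 1) ^+ 2 + (M 0 1 + M 1 0) ^+ 2 by rewrite addr_ge0 ?sqr_ge0.
by congr (0 <= _); ring.
Qed.

Lemma vnorm2_ge0 v : 0 <= vnorm2 v.
Proof. exact: sqrtr_ge0. Qed.

Lemma sqr_vnorm2 v : vnorm2 v ^+ 2 = v 0 0 ^+ 2 + v 1 0 ^+ 2.
Proof. by rewrite sqr_sqrtr // addr_ge0 ?sqr_ge0. Qed.

Lemma vnorm2Z (s : R) v : vnorm2 (s *: v) = `|s| * vnorm2 v.
Proof. by rewrite /vnorm2 !mxE -sqrtr_sqr -sqrtrM ?sqr_ge0 //; congr Num.sqrt; ring. Qed.

Lemma sqr_vnorm2_mulmx_le_frob2 M v : vnorm2 (M *m v) ^+ 2 <= frob2 M * vnorm2 v ^+ 2.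
Proof.
rewrite !sqr_vnorm2 !mulmx2E /frob2 -subr_ge0.
have : 0 <= (M 0 0 * v 1 0 - M 0 1 * v 0 0) ^+ 2 + (M 1 0 * v 1 0 - M 1 1 * v 0 0) ^+ 2.
  by rewrite addr_ge0 ?sqr_ge0.
by congr (0 <= _); ring.
Qed.

Lemma vnorm2_delta (i : 'I_2) : vnorm2 (delta_mx i 0 : 'cV[R]_2) = 1.
Proof.
by case: i => [[|[|//]] ?]; rewrite /vnorm2 !mxE /= expr1n expr0n ?addr0 ?add0r sqrtr1.
Qed.

Lemma vnorm2_mulmx_unit_le_frob2 M v : vnorm2 v = 1 -> vnorm2 (M *m v) <= Num.sqrt (frob2 M).
Proof.
move=> v1; rewrite -ler_sqr ?nnegrE ?sqrtr_ge0 ?vnorm2_ge0 // (sqr_sqrtr (frob2_ge0 M)).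
by have := sqr_vnorm2_mulmx_le_frob2 M v; rewrite v1 expr1n mulr1.
Qed.

Lemma has_sup_opnorm M : has_sup [set vnorm2 (M *m v) | v in [set v | vnorm2 v = 1]].
Proof.
split; first by exists (vnorm2 (M *m delta_mx 0 0)), (delta_mx 0 0); first exact: vnorm2_delta.
by exists (Num.sqrt (frob2 M)) => _ [v /= v1 <-]; exact: vnorm2_mulmx_unit_le_frob2.
Qed.

Lemma vnorm2_mulmx_unit_le M v : vnorm2 v = 1 -> vnorm2 (M *m v) <= opnorm M.
Proof. by move=> v1; apply: sup_upper_bound (has_sup_opnorm M) _ _; exists v. Qed.

Lemma opnorm_le M C : (forall v, vnorm2 v = 1 -> vnorm2 (M *m v) <= C) -> opnorm M <= C.
Proof.
move=> ub; apply: ge_sup => [|_ [v /= v1 <-]]; last exact: ub.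
by exists (vnorm2 (M *m delta_mx 0 0)), (delta_mx 0 0); first exact: vnorm2_delta.
Qed.

Lemma opnorm_ge0 M : 0 <= opnorm M.
Proof. exact: le_trans (vnorm2_ge0 _) (vnorm2_mulmx_unit_le M (vnorm2_delta 0)). Qed.

Lemma vnorm2_mulmx_le M v : vnorm2 (M *m v) <= opnorm M * vnorm2 v.
Proof.
have [v0|v_neq0] := eqVneq (vnorm2 v) 0.
  have := sqr_vnorm2_mulmx_le_frob2 M v; rewrite v0 expr0n mulr0 /= => Mv0.
  by rewrite mulr0 -(@ler_sqr _ _ 0) ?nnegrE ?vnorm2_ge0 // expr0n.
have v_gt0 : 0 < vnorm2 v by rewrite lt_def v_neq0 vnorm2_ge0.
have u1 : vnorm2 ((vnorm2 v)^-1 *: v) = 1.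
  by rewrite vnorm2Z ger0_norm ?invr_ge0 ?vnorm2_ge0 // mulVf.
have := vnorm2_mulmx_unit_le M u1.
by rewrite -scalemxAr vnorm2Z ger0_norm ?invr_ge0 ?vnorm2_ge0 // mulrC ler_pdivrMr.
Qed.

Lemma opnorm_mulmx_le A B : opnorm (A *m B) <= opnorm A * opnorm B.
Proof.
apply: opnorm_le => v v1; rewrite -mulmxA; apply: le_trans (vnorm2_mulmx_le A _) _.
by rewrite ler_wpM2l ?opnorm_ge0 // -[opnorm B]mulr1 -v1 vnorm2_mulmx_le.
Qed.

Lemma sqr_opnorm_le_frob2 M : opnorm M ^+ 2 <= frob2 M.
Proof.
rewrite -[frob2 M]sqr_sqrtr ?frob2_ge0 // ler_sqr ?nnegrE ?opnorm_ge0 ?sqrtr_ge0 //.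
by apply: opnorm_le => v; exact: vnorm2_mulmx_unit_le_frob2.
Qed.

Lemma frob2_le_sqr_opnorm M : frob2 M <= 2 * opnorm M ^+ 2.
Proof.
have col_le (j : 'I_2) : vnorm2 (M *m delta_mx j 0) ^+ 2 <= opnorm M ^+ 2.
  rewrite ler_sqr ?nnegrE ?vnorm2_ge0 ?opnorm_ge0 //.
  exact: vnorm2_mulmx_unit_le (vnorm2_delta j).
move: (col_le 0) (col_le 1); rewrite !sqr_vnorm2 !mulmx2E !mxE /= /frob2.
rewrite !mulr1 !mulr0 !addr0 !add0r; lra.
Qed.

Lemma opnorm_adj M : opnorm (\adj M) <= 2 * opnorm M.
Proof.
have := sqr_opnorm_le_frob2 (\adj M); rewrite frob2_adj => adj_le.
have := frob2_le_sqr_opnorm M; have := opnorm_ge0 M; have := opnorm_ge0 (\adj M).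
nra.
Qed.

Lemma opnorm_ge1 M : \det M = 1 -> 1 <= opnorm M.
Proof.
move=> M1; have := det_le_frob2 M; rewrite M1 mulr1 => frob2_ge2.
have := frob2_le_sqr_opnorm M; have := opnorm_ge0 M; nra.
Qed.

End OperatorNorm.

Section LogNorm.
Variable R : realType.
Implicit Types (M A B : 'M[R]_2).

Lemma ln_le_lnM (x y z : R) : 0 < x -> 0 < y -> 0 < z -> x <= y * z -> ln x <= ln y + ln z.
Proof. by move=> x0 y0 z0 le_xyz; rewrite -lnM ?posrE // ler_ln ?posrE ?mulr_gt0. Qed.

Lemma opnorm_gt0 M : \det M = 1 -> 0 < opnorm M.
Proof. by move/opnorm_ge1; apply: lt_le_trans. Qed.

Lemma det_invmx1 M : \det M = 1 -> \det (invmx M) = 1.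
Proof. by move=> M1; rewrite det_inv M1 invr1. Qed.

Lemma ln_opnorm_invmx M : \det M = 1 -> `|ln (opnorm (invmx M)) - ln (opnorm M)| <= ln 2.
Proof.
have inv_le (N : 'M[R]_2) : \det N = 1 -> ln (opnorm (invmx N)) <= ln 2 + ln (opnorm N).
  move=> N1; apply: ln_le_lnM; rewrite ?opnorm_gt0 ?det_invmx1 //.
  by rewrite invmx_det1 // opnorm_adj.
move=> M1; have := inv_le _ M1; have := inv_le _ (det_invmx1 M1).
by rewrite invmxK ler_norml => *; apply/andP; split; lra.
Qed.

Lemma ln_opnormM A B : \det A = 1 -> \det B = 1 ->
  `|ln (opnorm (A *m B)) - ln (opnorm A)| <= ln (opnorm B) + ln (opnorm (invmx B)).
Proof.
move=> A1 B1; have AB1 : \det (A *m B) = 1 by rewrite det_mulmx A1 B1 mulr1.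
have le_AB := ln_le_lnM (opnorm_gt0 AB1) (opnorm_gt0 A1) (opnorm_gt0 B1) (opnorm_mulmx_le A B).
have le_A : ln (opnorm A) <= ln (opnorm (A *m B)) + ln (opnorm (invmx B)).
  apply: ln_le_lnM; rewrite ?opnorm_gt0 ?det_invmx1 //.
  by rewrite -{1}[A](mulmxK (_ : B \in unitmx)) ?opnorm_mulmx_le // unitmxE B1 unitr1.
have := ln_ge0 (opnorm_ge1 B1); have := ln_ge0 (opnorm_ge1 (det_invmx1 B1)).
by rewrite ler_norml => *; apply/andP; split; lra.
Qed.

End LogNorm.

Section Shifts.
Variable R : realType.
Implicit Types w : seqZ R.

Lemma shiftZ0 w : shiftZ 0 w = w.
Proof. by apply/funext => n; rewrite /shiftZ addr0. Qed.

Lemma shiftZ_shiftZ j k w : shiftZ j (shiftZ k w) = shiftZ (j + k) w.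
Proof. by apply/funext => n; rewrite /shiftZ addrA. Qed.

Lemma shiftE w : Defs.shift w = shiftZ 1 w.
Proof. by []. Qed.

Lemma ushiftE w : ushift w = shiftZ (-1) w.
Proof. by []. Qed.

Lemma iter_shift m w : iter m (@Defs.shift R) w = shiftZ m w.
Proof.
elim: m => [|m IH]; first by rewrite shiftZ0.
by rewrite iterS IH shiftE shiftZ_shiftZ; congr shiftZ; lia.
Qed.

Lemma iter_ushift m w : iter m (@ushift R) w = shiftZ (- m%:Z) w.
Proof.
elim: m => [|m IH]; first by rewrite shiftZ0.
by rewrite iterS IH ushiftE shiftZ_shiftZ (_ : -1 - m%:Z = - m.+1%:Z) //; lia.
Qed.

Lemma shift_invariant_shiftZ (P : set (seqZ R)) w k :
  shift_invariant P -> P w -> P (shiftZ k w).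
Proof.
move=> P_inv Pw; elim/int_rec: k => [|n IH|n IH]; first by rewrite shiftZ0.
- by rewrite -addn1 PoszD addrC -shiftZ_shiftZ -shiftE; exact: (P_inv _ IH).1.
- rewrite (_ : - n.+1%:Z = -1 - n%:Z); last by lia.
  by rewrite -shiftZ_shiftZ -ushiftE; exact: (P_inv _ IH).2.
Qed.

End Shifts.

Section Cocycle.
Variables (R : realType) (E : R).
Implicit Types (w : seqZ R) (x : seq R).

Definition readword w n : seq R := mkseq (fun i => w (1 + i%:Z)) n.

Lemma size_readword w n : size (readword w n) = n.
Proof. exact: size_mkseq. Qed.

Lemma eq_readword w w' n : (forall i, (i < n)%N -> w (1 + i%:Z) = w' (1 + i%:Z)) ->
  readword w n = readword w' n.
Proof.
move=> ww'; apply: (@eq_from_nth _ 0); rewrite ?size_readword // => i lt_in.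
by rewrite !nth_mkseq ?ww'.
Qed.

Lemma wordmat_rcons x a : wordmat E (rcons x a) = tmat E a *m wordmat E x.
Proof. by rewrite /wordmat foldl_rcons. Qed.

Lemma det_tmat a : \det (tmat E a) = 1.
Proof. by rewrite det_mx22 !mxE /= mulr0 mulr1 sub0r opprK. Qed.

Lemma det_wordmat x : \det (wordmat E x) = 1.
Proof.
elim/last_ind: x => [|x a IH]; first exact: det1.
by rewrite wordmat_rcons det_mulmx det_tmat IH mulr1.
Qed.

Lemma Mpos_readword w n : Mpos E w n = wordmat E (readword w n).
Proof.
elim: n => [|n IH] //=; rewrite /readword mkseqS wordmat_rcons -/(readword w n) -IH.
by rewrite /Mone iter_shift /shiftZ addrC.
Qed.

Lemma det_Mpos w n : \det (Mpos E w n) = 1.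
Proof. by rewrite Mpos_readword det_wordmat. Qed.

Lemma Mpos_shift w n : Mpos E w n.+1 = Mpos E (Defs.shift w) n *m tmat E (w 1).
Proof.
elim: n => [|n IH]; first by rewrite /= mul1mx mulmx1.
by rewrite -[LHS]/(Mone E (iter n.+1 (@Defs.shift R) w) *m Mpos E w n.+1) IH mulmxA iterSr.
Qed.

Lemma Mneg_invmx w m : Mneg E w m = invmx (Mpos E (shiftZ (- m%:Z) w) m).
Proof.
elim: m => [|m IH]; first by rewrite invmx1.
have -> : Mneg E w m.+1 = invmx (Mone E (iter m.+1 (@ushift R) w)) *m Mneg E w m by [].
rewrite IH Mpos_shift (invmxM_det1 (det_Mpos _ _) (det_tmat _)).
rewrite iter_ushift shiftE shiftZ_shiftZ.
by have -> : 1 - m.+1%:Z = - m%:Z by lia.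
Qed.

Lemma readword_words (Om : set (seqZ R)) w k n : Om w -> words Om (readword (shiftZ k w) n).
Proof.
move=> Om_w; exists w => //; exists (k + 1) => i; rewrite size_readword => lt_in.
by rewrite nth_mkseq // /shiftZ; congr w; ring.
Qed.

Lemma words_readword (Om : set (seqZ R)) x : shift_invariant Om ->
  words Om x -> exists2 v, Om v & x = readword v (size x).
Proof.
move=> Om_inv [w Om_w [k xE]]; exists (shiftZ (k - 1) w); first exact: shift_invariant_shiftZ.
apply: (@eq_from_nth _ 0); rewrite ?size_readword // => i lt_ix.
by rewrite nth_mkseq // xE // /shiftZ; congr w; ring.
Qed.

End Cocycle.

Section GrowthRate.
Variable R : realType.

Lemma eq_of_dist_lt (a b : R) : (forall e : R, 0 < e -> `|a - b| < e) -> a = b.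
Proof.
move=> dist_lt; have [//|neq_ab] := eqVneq a b.
by have := dist_lt `|a - b|; rewrite ltxx normr_gt0 subr_eq0 neq_ab => /(_ isT).
Qed.

Lemma exists_nat_gt (K : R) : exists N : nat, forall n, (N <= n)%N -> K < n%:R.
Proof.
exists (Num.truncn K).+1 => n le_Kn.
by apply: lt_le_trans (truncnS_gt K) _; rewrite ler_nat.
Qed.

Lemma growth_rate_shift (u v : nat -> R) (C a b : R) :
  (forall n, `|u n.+1 - v n| <= C) ->
  (forall e : R, 0 < e -> exists N : nat, forall n, (N <= n)%N -> `|u n / n%:R - a| < e) ->
  (forall e : R, 0 < e -> exists N : nat, forall n, (N <= n)%N -> `|v n / n%:R - b| < e) ->
  a = b.
Proof.
move=> uv_le cvg_u cvg_v; apply: eq_of_dist_lt => e e_gt0.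
have e3 : 0 < e / 3 by rewrite divr_gt0.
have [N1 near_u] := cvg_u _ e3; have [N2 near_v] := cvg_v _ e3.
have [N3 large] := exists_nat_gt ((C + `|b| + e / 3) / (e / 3)).
pose n := (N1 + N2 + N3).+1.
have [le_N1 le_N2 le_N3] : [/\ (N1 <= n.+1)%N, (N2 <= n)%N & (N3 <= n.+1)%N].
  by rewrite /n; split; lia.
have {near_u}near_u := near_u _ le_N1; have {near_v}near_v := near_v _ le_N2.
have {large}large := large _ le_N3.
have n_gt0 : (0 : R) < n%:R by rewrite ltr0n.
have Sn_gt0 : (0 : R) < n.+1%:R by rewrite ltr0n.
rewrite ltr_pdivrMr // in large.
set q := u n.+1 / n.+1%:R in near_u; set p := v n / n%:R in near_v.
have qp : q - p = (u n.+1 - v n - p) / n.+1%:R.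
  by rewrite /q /p -natr1; field; rewrite natr1 !gt_eqF.
have p_le : `|p| <= `|b| + e / 3.
  by have := lerB_dist p b; lra.
have num_le : `|u n.+1 - v n - p| <= C + `|b| + e / 3.
  by apply: le_trans (ler_normB _ _) _; have := uv_le n; lra.
have qp_lt : `|q - p| < e / 3 by rewrite qp normrM normfV (gtr0_norm Sn_gt0) ltr_pdivrMr //; lra.
by have := ler_distD q a b; have := ler_distD p q b; rewrite distrC in near_u; lra.
Qed.

End GrowthRate.

Section UniformGrowth.
Variables (R : realType) (E : R) (Om : set (seqZ R)) (L : seqZ R -> R).
Hypothesis Om_inv : shift_invariant Om.
Hypothesis L_unif : forall e : R, 0 < e -> exists N : nat, forall n, (N <= n)%N ->
  forall w, Om w -> `|ln (opnorm (Mpos E w n)) / n%:R - L w| < e.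

Lemma uniform_rate_shift w : Om w -> L (Defs.shift w) = L w.
Proof.
move=> Om_w; apply/esym/(@growth_rate_shift _ (fun n => ln (opnorm (Mpos E w n)))
  (fun n => ln (opnorm (Mpos E (Defs.shift w) n)))).
- by move=> n; rewrite Mpos_shift; apply: ln_opnormM; rewrite ?det_Mpos ?det_tmat.
- by move=> e /L_unif [N near_L]; exists N => n /near_L; apply.
- by move=> e /L_unif [N near_L]; exists N => n /near_L; apply; exact: (Om_inv Om_w).1.
Qed.

Lemma uniform_rate_shiftZ w k : Om w -> L (shiftZ k w) = L w.
Proof.
move=> Om_w; suff [] : Om (shiftZ k w) /\ L (shiftZ k w) = L w by [].
apply: (@shift_invariant_shiftZ _ (fun v => Om v /\ L v = L w)) => // v [Om_v <-].
have [Om_sv Om_uv] := Om_inv Om_v.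
split; split => //; first exact: uniform_rate_shift.
have shift_ushift : Defs.shift (ushift v) = v.
  by rewrite shiftE ushiftE shiftZ_shiftZ subrr shiftZ0.
by rewrite -{2}shift_ushift uniform_rate_shift.
Qed.

Hypothesis Om_min : minimal_subshift Om.

Lemma uniform_rate_const w w' : Om w -> Om w' -> L w = L w'.
Proof.
move=> Om_w Om_w'; apply: eq_of_dist_lt => e e_gt0.
have [N near_L] := L_unif (divr_gt0 e_gt0 (ltr0n _ 2)).
have [k agree] := Om_min Om_w Om_w' N.
have same_word : Mpos E (shiftZ k w) N = Mpos E w' N.
  by rewrite !Mpos_readword; congr wordmat; apply: eq_readword => i lt_iN; apply: agree; lia.
have := near_L N (leqnn N) _ (shift_invariant_shiftZ k Om_inv Om_w).
rewrite same_word uniform_rate_shiftZ // distrC => near_w.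
have := near_L N (leqnn N) _ Om_w'.
by have := ler_distD (ln (opnorm (Mpos E w' N)) / N%:R) (L w) (L w'); lra.
Qed.

Lemma word_limit_of_uniform_rate : word_limit_exists Om E.
Proof.
have [[w0 Om_w0]|no_w] := pselect (exists w, Om w); last first.
  by exists 0 => e _; exists 0%N => x [w Om_w _]; case: no_w; exists w.
exists (L w0) => e /L_unif [N near_L]; exists N => x Wx le_Nx.
have [v Om_v xE] := words_readword Om_inv Wx.
rewrite /FE {1}xE -Mpos_readword -(uniform_rate_const Om_v Om_w0).
exact: near_L.
Qed.

End UniformGrowth.

Lemma ln_opnorm_Mcocycle_word (R : realType) (E : R) (Om : set (seqZ R)) w n : Om w ->
  exists2 x, words Om x /\ size x = `|n|%N &
    `|ln (opnorm (Mcocycle E n w)) - FE E x| <= ln 2.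
Proof.
move=> Om_w; case: n => [k|m].
- exists (readword (shiftZ 0 w) k); first by split; [exact: readword_words | exact: size_readword].
  by rewrite shiftZ0 /FE -Mpos_readword subrr normr0 ln_ge0 // ler1n.
- exists (readword (shiftZ (- m.+1%:Z) w) m.+1).
    by split; [exact: readword_words | exact: size_readword].
  rewrite -[Mcocycle _ _ _]/(Mneg E w m.+1) Mneg_invmx /FE Mpos_readword.
  exact/ln_opnorm_invmx/det_wordmat.
Qed.

Lemma uniform_of_word_limit (R : realType) (Om : set (seqZ R)) (E : R) :
  word_limit_exists Om E -> uniform_cocycle Om E.
Proof.
move=> [l near_l]; exists (fun _ => l) => e e_gt0.
have e2 : 0 < e / 2 by rewrite divr_gt0.
have [N1 near_F] := near_l _ e2; have [N2 large] := exists_nat_gt (ln 2 / (e / 2)).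
exists (maxn N1 N2.+1) => n; rewrite geq_max => /andP[le_N1 lt_N2] w Om_w.
have [x [Wx size_x] near_M] := ln_opnorm_Mcocycle_word E n Om_w.
have := near_F x Wx; rewrite size_x => /(_ le_N1) {}near_F.
have n_gt0 : (0 : R) < `|n|%N%:R by rewrite ltr0n (leq_ltn_trans _ lt_N2).
have := large _ (ltnW lt_N2); rewrite ltr_pdivrMr // => {}large.
set a := ln (opnorm (Mcocycle E n w)) in near_M *.
have -> : a / `|n|%N%:R - l = (a - FE E x) / `|n|%N%:R + (FE E x / `|n|%N%:R - l).
  by field; rewrite gt_eqF.
apply: le_lt_trans (ler_normD _ _) _.
have : `|(a - FE E x) / `|n|%N%:R| < e / 2.
  by rewrite normrM normfV (gtr0_norm n_gt0) ltr_pdivrMr //; lra.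
lra.
Qed.

Theorem proposition4p4 (R : realType) (A : seq R) (Om : set (seqZ R)) (E : R) :
  subshift A Om -> strictly_ergodic Om ->
  (uniform_cocycle Om E <-> word_limit_exists Om E).
Proof.
move=> [_ _ Om_inv] [Om_min _]; split; last exact: uniform_of_word_limit.
move=> [L L_unif]; apply: (word_limit_of_uniform_rate (L := L)) => // e /L_unif [N near_L].
by exists N => n le_Nn; exact: near_L (Posz n) le_Nn.
Qed.
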